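(* There exists a symmetric noncommutative polynomial $f\in\mathbb{R}\langle x_1,x_2,x_3\rangle$ such that $f\in\mathbb{R}\langle x_1,x_2\rangle+\mathbb{R}\langle x_2,x_3\rangle$ and $f$ is a sum of hermitian squares in $\mathbb{R}\langle x_1,x_2,x_3\rangle$, but $f\notin\Sigma\langle x_1,x_2\rangle+\Sigma\langle x_2,x_3\rangle$.
   Context: $\mathbb{R}\langle x_1,\dots,x_n\rangle$ is the free real algebra of polynomials in noncommuting letters $x_1,\dots,x_n$, equipped with the involution $\star$ fixing $\mathbb{R}\cup\{x_1,\dots,x_n\}$ pointwise and reversing words; $f$ is symmetric if $f^\star=f$. A sum of hermitian squares (SOHS) is a polynomial of the form $\sum_i h_i^\star h_i$. For a subset of letters, $\mathbb{R}\langle x_i,x_j\rangle$ denotes the subalgebra of polynomials in those letters only, and $\Sigma\langle x_i,x_j\rangle$ the set of sums of hermitian squares $\sum_k h_k^\star h_k$ with all $h_k\in\mathbb{R}\langle x_i,x_j\rangle$. *)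

From HB Require Import structures.
From mathcomp Require Import all_boot all_order all_algebra.
From mathcomp Require Import reals.
Set Implicit Arguments. Unset Strict Implicit. Unset Printing Implicit Defensive.
Import Order.TTheory GRing.Theory Num.Theory.
Local Open Scope ring_scope.

(* Letters x_1, x_2, x_3 are the elements 0, 1, 2 of 'I_3.
   Words are sequences of letters; the empty word is the unit 1. *)
Definition word := seq 'I_3.

(* A noncommutative polynomial is given by its coefficient function on words,
   required to have finite support (equivalently, since the alphabet is finite,
   bounded degree). *)
Definition ncpoly (R : realType) := word -> R.

Definition is_ncpoly (R : realType) (f : ncpoly R) : Prop :=
  exists N : nat, forall w : word, (N < size w)%N -> f w = 0.

Definition ncmul (R : realType) (f g : ncpoly R) : ncpoly R :=
  fun w => \sum_(i < (size w).+1) f (take i w) * g (drop i w).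

(* The involution star: fixes reals and letters, reverses words. *)
Definition ncstar (R : realType) (f : ncpoly R) : ncpoly R := fun w => f (rev w).

Definition ncsymmetric (R : realType) (f : ncpoly R) : Prop :=
  forall w, ncstar f w = f w.

(* f lies in the subalgebra generated by the letters in S:
   every word in the support of f uses only letters from S. *)
Definition in_letters (R : realType) (S : pred 'I_3) (f : ncpoly R) : Prop :=
  is_ncpoly f /\ forall w : word, f w != 0 -> all S w.

Definition sohs_in (R : realType) (S : pred 'I_3) (f : ncpoly R) : Prop :=
  exists hs : seq (ncpoly R),
    (forall i : nat, (i < size hs)%N -> in_letters S (nth (fun _ => 0) hs i)) /\
    forall w, f w = \sum_(h <- hs) ncmul (ncstar h) h w.

Definition L12 : pred 'I_3 := fun i => (val i <= 1)%N.
Definition L23 : pred 'I_3 := fun i => (1 <= val i)%N.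
Definition Lall : pred 'I_3 := predT.

From HB Require Import structures.
From mathcomp Require Import all_boot all_order all_algebra.
From mathcomp Require Import reals.
From mathcomp Require Import zify ring.
Set Implicit Arguments. Unset Strict Implicit. Unset Printing Implicit Defensive.
Import Order.TTheory GRing.Theory Num.Theory.
Local Open Scope ring_scope.

(* With h1 = x1 - x2 + x2 x3 and h2 = x2 x1 - x3, the witness is
     f = h1^* h1 + h2^* h2
       = x1^2 - x1 x2 - x2 x1 + x2^2 + x3^2 + x1 x2^2 x1 - x2^2 x3 - x3 x2^2 + x3 x2^2 x3,
   every monomial of which lies in R<x1,x2> or in R<x2,x3>.
   Suppose f = sum_i h_i^* h_i with each h_i in R<x1,x2> or in R<x2,x3>.  The coefficient
   of w^* w for a word w of maximal length is sum_i h_i(w)^2, so deg h_i <= 2, and the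
   constant term gives h_i(1) = 0.  Writing a_i, b_i for the coefficients of x1, x2 in h_i,
   the coefficients of x1^2, x2^2 and x1 x2 give sum_i (a_i + b_i)^2 = 1 + 1 - 2 = 0, so
   a_i = -b_i; the coefficient of x2^4 gives h_i(x2 x2) = 0.  Hence the coefficient -1 of
   x2^2 x3 is sum_i b_i h_i(x2 x3), but every term vanishes: h_i(x2 x3) = 0 when h_i is in
   R<x1,x2>, and b_i = -a_i = 0 when h_i is in R<x2,x3>. *)

Lemma nat_down_ind (P : nat -> Prop) d N :
  (d <= N)%N -> P N -> (forall k, (d <= k)%N -> P k.+1 -> P k) -> P d.
Proof.
move=> /subnK <-; elim: (N - d)%N => [|m IH] Pm step; first by rewrite add0n in Pm.
by apply: IH => //; apply: step; rewrite ?leq_addl // -addSn.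
Qed.

Lemma sum_sqr_eq0 (R : realDomainType) n (c : 'I_n -> R) :
  \sum_(i < n) c i ^+ 2 = 0 -> forall i, c i = 0.
Proof.
move=> /(psumr_eq0P (fun j _ => sqr_ge0 (c j))) c0 i.
by apply/eqP; rewrite -sqrf_eq0 c0.
Qed.

Section HermitianSquares.
Variable R : realType.
Implicit Types (x : ncpoly R) (w : word).

Definition hsq x : ncpoly R := ncmul (ncstar x) x.

Definition ncdeg_le x (d : nat) : Prop := forall w, (d < size w)%N -> x w = 0.

Lemma ncdeg_le_mono x d e : ncdeg_le x d -> (d <= e)%N -> ncdeg_le x e.
Proof. by move=> xd de w ew; apply: xd; apply: leq_ltn_trans ew. Qed.

Lemma in_letters_eq0 S x w : in_letters S x -> ~~ all S w -> x w = 0.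
Proof. by move=> [_ xS] Sw; apply/eqP; apply: contraNT Sw; exact: xS. Qed.

Lemma in_letters_split S T x :
  is_ncpoly x -> (forall w, x w != 0 -> all S w || all T w) ->
  exists g h, in_letters S g /\ in_letters T h /\ forall w, x w = g w + h w.
Proof.
move=> [N xN] xST.
exists (fun w => if all S w then x w else 0), (fun w => if all S w then 0 else x w).
split; [split|split; [split|]].
- by exists N => w /xN ->; rewrite if_same.
- by move=> w; case: ifP => //; rewrite eqxx.
- by exists N => w /xN ->; rewrite if_same.
- by move=> w; case: ifP => [|Sw /xST]; [rewrite eqxx | rewrite Sw].
- by move=> w; case: ifP; rewrite ?addr0 ?add0r.
Qed.

Lemma hsq_sym x : ncsymmetric (hsq x).
Proof.
move=> w; rewrite /ncstar /hsq /ncmul /ncstar size_rev (reindex_inj rev_ord_inj) /=.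
apply: eq_bigr => i _; rewrite subSS take_rev drop_rev revK subKn -1?ltnS //.
exact: mulrC.
Qed.

Lemma hsq_nil x : hsq x [::] = x [::] ^+ 2.
Proof. by rewrite /hsq /ncmul big_ord_recl big_ord0 addr0. Qed.

Lemma hsq_pair x a b : x [::] = 0 -> hsq x [:: a; b] = x [:: a] * x [:: b].
Proof.
move=> x0; rewrite /hsq /ncmul /ncstar /= !big_ord_recl big_ord0 /= x0.
by rewrite mul0r mulr0 !addr0 add0r.
Qed.

Lemma hsq_triple x a b c : x [::] = 0 ->
  hsq x [:: a; b; c] = x [:: a] * x [:: b; c] + x [:: b; a] * x [:: c].
Proof.
move=> x0; rewrite /hsq /ncmul /ncstar /= !big_ord_recl big_ord0 /= x0.
by rewrite mul0r mulr0 !addr0 add0r.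
Qed.

Lemma hsq_rev_cat x u : ncdeg_le x (size u) -> hsq x (rev u ++ u) = x u ^+ 2.
Proof.
move=> xu; rewrite /hsq /ncmul /ncstar size_cat size_rev.
have ltu : (size u < (size u + size u).+1)%N by rewrite ltnS leq_addr.
rewrite (bigD1 (Ordinal ltu)) //= take_size_cat ?size_rev // revK.
rewrite drop_size_cat ?size_rev // big1 ?addr0 // => i neq_iu.
have {}neq_iu : val i != size u by apply: contra_neq neq_iu => iu; exact: val_inj.
move: (ltn_ord i); rewrite ltnS => i2u.
case: (ltngtP i (size u)) neq_iu => // [iu|ui] _.
- by rewrite (xu (drop i _)) ?mulr0 // size_drop size_cat size_rev; lia.
- by rewrite (xu (rev (take i _))) ?mul0r // size_rev size_takel // size_cat size_rev.
Qed.

Lemma ncdeg_le_hsq x d : ncdeg_le x d -> ncdeg_le (hsq x) (d + d).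
Proof.
move=> xd w dw; apply: big1 => i _; case: (leqP i d) => [id|di].
- by rewrite (xd (drop i w)) ?mulr0 // size_drop; lia.
- by rewrite /ncstar (xd (rev (take i w))) ?mul0r // size_rev size_takel // -ltnS.
Qed.

Lemma ncdeg_le_family n (H : 'I_n -> ncpoly R) :
  (forall i, is_ncpoly (H i)) -> exists N, forall i, ncdeg_le (H i) N.
Proof.
move=> Hpoly; suff [N HN] : exists N, forall i, i \in enum 'I_n -> ncdeg_le (H i) N.
  by exists N => i; apply: HN; rewrite mem_enum.
elim: (enum 'I_n) => [|j s [N HN]]; first by exists 0%N.
have [Nj HNj] := Hpoly j; exists (maxn N Nj) => i; rewrite inE.
case/predU1P => [->|/HN iN].
- by apply: ncdeg_le_mono HNj _; rewrite leq_maxr.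
- by apply: ncdeg_le_mono iN _; rewrite leq_maxl.
Qed.

Lemma sohs_ncdeg_le n (H : 'I_n -> ncpoly R) d :
  (forall i, is_ncpoly (H i)) ->
  ncdeg_le (fun w => \sum_(i < n) hsq (H i) w) (d + d) ->
  forall i, ncdeg_le (H i) d.
Proof.
move=> Hpoly Hsum; have [N HN] := ncdeg_le_family Hpoly.
apply: (@nat_down_ind (fun k => forall i, ncdeg_le (H i) k) d (maxn N d)).
- exact: leq_maxr.
- by move=> i; apply: ncdeg_le_mono (HN i) (leq_maxl _ _).
move=> k dk Hk i w; rewrite leq_eqVlt => /predU1P[kw|]; last exact: Hk.
have: \sum_(j < n) H j w ^+ 2 = 0.
  rewrite -[RHS](Hsum (rev w ++ w)); last by rewrite size_cat size_rev -kw; lia.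
  by apply: eq_bigr => j _; rewrite hsq_rev_cat // -kw.
by move/sum_sqr_eq0.
Qed.

Lemma sohs_in_add S T g h : sohs_in S g -> sohs_in T h ->
  exists n (H : 'I_n -> ncpoly R),
    (forall i, in_letters S (H i) \/ in_letters T (H i)) /\
    forall w, g w + h w = \sum_(i < n) hsq (H i) w.
Proof.
move=> [gs [gsS gE]] [hs [hsT hE]].
exists (size (gs ++ hs)), (fun i => nth (fun=> 0) (gs ++ hs) i); split.
- move=> i; rewrite nth_cat; case: ltnP => [|gi]; first by left; exact: gsS.
  right; apply: hsT; rewrite ltn_subLR // -size_cat; exact: ltn_ord.
- by move=> w; rewrite gE hE -big_cat (big_nth (fun=> 0)) big_mkord.
Qed.

End HermitianSquares.

Definition x1 : 'I_3 := @Ordinal 3 0 isT.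
Definition x2 : 'I_3 := @Ordinal 3 1 isT.
Definition x3 : 'I_3 := @Ordinal 3 2 isT.

Lemma mem_letters (i : 'I_3) : i \in [:: x1; x2; x3].
Proof. by case: i => -[|[|[|m]]] lt_m3 //; rewrite !inE -!(inj_eq val_inj). Qed.

Fixpoint words (n : nat) : seq word :=
  if n is k.+1 then [seq i :: w | i <- [:: x1; x2; x3], w <- words k] else [:: [::]].

Lemma mem_words w : w \in words (size w).
Proof.
elim: w => [|i w IHw]; first exact: mem_head.
exact: allpairs_f (mem_letters i) IHw.
Qed.

Lemma all_words_le (P : pred word) d :
  all (fun k => all P (words k)) (iota 0 d.+1) -> forall w, (size w <= d)%N -> P w.
Proof.
move=> /allP Pd w wd.
have /allP Pw : all P (words (size w)) by apply: Pd; rewrite mem_iota ltnS.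
exact: Pw (mem_words w).
Qed.

(* Integer coefficients, evaluated by [vm_compute]: hence [foldr], as bigops are locked. *)
Definition zhsq (p : word -> int) (w : word) : int :=
  foldr +%R 0 [seq p (rev (take i w)) * p (drop i w) | i <- iota 0 (size w).+1].

Definition zpoly (R : realType) (p : word -> int) : ncpoly R := fun w => (p w)%:~R.

Lemma hsq_zpoly (R : realType) p w : hsq (zpoly R p) w = (zhsq p w)%:~R.
Proof.
rewrite /hsq /ncmul /ncstar /zhsq foldrE big_map.
rewrite -[iota 0 _]/(index_iota 0 (size w).+1) big_mkord.
by rewrite rmorph_sum; apply: eq_bigr => i _; rewrite rmorphM.
Qed.

Definition h1z (w : word) : int :=
  if w == [:: x1] then 1 else if w == [:: x2] then -1
  else if w == [:: x2; x3] then 1 else 0.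

Definition h2z (w : word) : int :=
  if w == [:: x2; x1] then 1 else if w == [:: x3] then -1 else 0.

Definition fz (w : word) : int := zhsq h1z w + zhsq h2z w.

Lemma fz_support_check :
  all (fun k => all (fun w => (fz w != 0) ==> (all L12 w || all L23 w)) (words k))
      (iota 0 5).
Proof. by vm_compute. Qed.

Section Witness.
Variable R : realType.

Definition f0 : ncpoly R := fun w => hsq (zpoly R h1z) w + hsq (zpoly R h2z) w.

Lemma f0E w : f0 w = (fz w)%:~R.
Proof. by rewrite /f0 !hsq_zpoly -intrD. Qed.

Lemma ncdeg_le_h1 : ncdeg_le (zpoly R h1z) 2.
Proof.
move=> w w2; rewrite /zpoly /h1z.
by do ![case: eqP => [wE|_]; first by rewrite wE in w2].
Qed.

Lemma ncdeg_le_h2 : ncdeg_le (zpoly R h2z) 2.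
Proof.
move=> w w2; rewrite /zpoly /h2z.
by do ![case: eqP => [wE|_]; first by rewrite wE in w2].
Qed.

Lemma ncdeg_le_f0 : ncdeg_le f0 4.
Proof.
move=> w w4; rewrite /f0 (ncdeg_le_hsq ncdeg_le_h1) //.
by rewrite (ncdeg_le_hsq ncdeg_le_h2) ?addr0.
Qed.

Lemma f0_sym : ncsymmetric f0.
Proof. by move=> w; rewrite /ncstar /f0; congr (_ + _); apply: hsq_sym. Qed.

Lemma f0_support w : f0 w != 0 -> all L12 w || all L23 w.
Proof.
case: (leqP (size w) 4) => [w4|/ncdeg_le_f0->]; last by rewrite eqxx.
by rewrite f0E intr_eq0; apply/implyP; exact: all_words_le fz_support_check w w4.
Qed.

Lemma f0_sohs : sohs_in Lall f0.
Proof.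
exists [:: zpoly R h1z; zpoly R h2z].
split; last by move=> w; rewrite !big_cons big_nil addr0.
case=> [|[|//]] _; split=> [|w _]; rewrite ?all_predT //.
- by exists 2%N; exact: ncdeg_le_h1.
- by exists 2%N; exact: ncdeg_le_h2.
Qed.

End Witness.

Section NoSplitSohs.
Variables (R : realType) (n : nat) (H : 'I_n -> ncpoly R).
Hypothesis H_letters : forall i, in_letters L12 (H i) \/ in_letters L23 (H i).
Hypothesis f0_eq_sohs : forall w, f0 R w = \sum_(i < n) hsq (H i) w.

Let coefE w : \sum_(i < n) hsq (H i) w = (fz w)%:~R.
Proof. by rewrite -f0_eq_sohs f0E. Qed.

Let H_deg i : ncdeg_le (H i) 2.
Proof.
apply: sohs_ncdeg_le => [j|w w4]; first by case: (H_letters j) => -[].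
by rewrite /= -f0_eq_sohs; exact: ncdeg_le_f0.
Qed.

Let H_nil i : H i [::] = 0.
Proof.
apply: (@sum_sqr_eq0 _ n (fun j => H j [::])).
by under eq_bigr do rewrite -hsq_nil; rewrite coefE.
Qed.

Let H_x1_x2 i : H i [:: x1] + H i [:: x2] = 0.
Proof.
have coef2 a b : \sum_(j < n) H j [:: a] * H j [:: b] = (fz [:: a; b])%:~R.
  by rewrite -coefE; apply: eq_bigr => j _; rewrite hsq_pair ?H_nil.
apply: (@sum_sqr_eq0 _ n (fun j => H j [:: x1] + H j [:: x2])).
have -> : \sum_(j < n) (H j [:: x1] + H j [:: x2]) ^+ 2 =
    \sum_(j < n) H j [:: x1] * H j [:: x1]
    + (\sum_(j < n) H j [:: x1] * H j [:: x2]) *+ 2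
    + \sum_(j < n) H j [:: x2] * H j [:: x2].
  by rewrite -sumrMnl -!big_split; apply: eq_bigr => j _; rewrite sqrrD expr2.
rewrite !coef2 -[fz [:: x1; x1]]/(1 : int) -[fz [:: x2; x2]]/(1 : int).
by rewrite -[fz [:: x1; x2]]/(-1 : int); ring.
Qed.

Let H_x2x2 i : H i [:: x2; x2] = 0.
Proof.
apply: (@sum_sqr_eq0 _ n (fun j => H j [:: x2; x2])).
by under eq_bigr do rewrite -(@hsq_rev_cat _ _ [:: x2; x2] (H_deg _)); rewrite coefE.
Qed.

Lemma f0_not_split_sohs : False.
Proof.
have : \sum_(i < n) hsq (H i) [:: x2; x2; x3] = 0.
  apply: big1 => i _; rewrite hsq_triple ?H_nil // H_x2x2 mul0r addr0.
  case: (H_letters i) => HS.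
  - by rewrite (in_letters_eq0 (w := [:: x2; x3]) HS) ?mulr0.
  - move: (H_x1_x2 i); rewrite (in_letters_eq0 (w := [:: x1]) HS) // add0r => ->.
    by rewrite mul0r.
by rewrite coefE => /eqP; rewrite intr_eq0.
Qed.

End NoSplitSohs.

Theorem lemma6p2 (R : realType) :
  exists f : ncpoly R,
    is_ncpoly f /\ ncsymmetric f /\
    (exists g h : ncpoly R, in_letters L12 g /\ in_letters L23 h /\
        forall w, f w = g w + h w) /\
    sohs_in Lall f /\
    ~ (exists g h : ncpoly R, sohs_in L12 g /\ sohs_in L23 h /\
        forall w, f w = g w + h w).
Proof.
have f0_poly : is_ncpoly (f0 R) by exists 4%N; exact: ncdeg_le_f0.
exists (f0 R); split; [exact: f0_poly | split; [exact: f0_sym | split]].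
  exact: in_letters_split f0_poly (@f0_support R).
split; first exact: f0_sohs.
move=> [g [h [gS [hS fgh]]]].
have [n [H [H_letters gh_sohs]]] := sohs_in_add gS hS.
by apply: (f0_not_split_sohs H_letters) => w; rewrite fgh gh_sohs.
Qed.
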